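(* Let $n_1,n_2,n_3$ be integers with $3\le n_1,n_2\le n_3$ and let $W$ be a subset of the vertex set of $K(\mathbf{n})$. If the landmark graph $\mathcal{G}(W)$ contains a triple loop and a rainbow $2$-$2$-triangle, then $W$ is not a resolving set of $K(\mathbf{n})$.
   Context: $K(\mathbf{n})=K_{n_1}\times K_{n_2}\times K_{n_3}$ is the direct product of complete graphs: vertices are triples $(x_1,x_2,x_3)$, $1\le x_i\le n_i$, adjacent iff they differ in every coordinate. A set $W$ of vertices is resolving if for every two distinct vertices $x,y\notin W$ some $w\in W$ has $d(x,w)\neq d(y,w)$. Landmark graph: $W_{i,a}=\{w\in W: w_i=a\}$; $\mathcal{G}(W)$ is the hypergraph on $W$ whose hyperedges are the nonempty $W_{i,a}$, each colored $i$. A triple loop is a vertex $u\in W$ such that $\{u\}=W_{1,u_1}=W_{2,u_2}=W_{3,u_3}$. A rainbow $2$-$2$-triangle: distinct $w_1,w_2,w_3\in W$ and $\{i,j,k\}=\{1,2,3\}$ with $\{w_1,w_2\}$ a hyperedge of color $i$, $\{w_2,w_3\}$ a hyperedge of color $j$, and $w_1,w_3$ in a common hyperedge of color $k$. *)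

From mathcomp Require Import all_boot.
Set Implicit Arguments. Unset Strict Implicit. Unset Printing Implicit Defensive.

Definition vtx (n1 n2 n3 : nat) : finType := ('I_n1 * 'I_n2 * 'I_n3)%type.

(* coordinate i (i = 0,1,2 stands for 1,2,3 in the paper) as a nat *)
Definition coord n1 n2 n3 (v : vtx n1 n2 n3) (i : 'I_3) : nat :=
  match val i with
  | 0 => val v.1.1
  | 1 => val v.1.2
  | _ => val v.2
  end.

(* adjacency in the direct product of complete graphs: differ in every coordinate *)
Definition adj n1 n2 n3 (x y : vtx n1 n2 n3) : bool :=
  [&& x.1.1 != y.1.1, x.1.2 != y.1.2 & x.2 != y.2].

Fixpoint walk n1 n2 n3 (k : nat) (x y : vtx n1 n2 n3) : bool :=
  match k with
  | 0 => x == y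
  | k'.+1 => [exists z, adj x z && walk k' z y]
  end.

(* graph distance: least k with a walk of length k; all finite distances are
   < #|V|, and unreachable pairs get the value #|V| (playing the role of oo). *)
Definition dist n1 n2 n3 (x y : vtx n1 n2 n3) : nat :=
  find (fun k => walk k x y) (iota 0 #|vtx n1 n2 n3|).

Definition resolving n1 n2 n3 (W : {set vtx n1 n2 n3}) : Prop :=
  forall x y : vtx n1 n2 n3, x \notin W -> y \notin W -> x != y ->
    exists2 w, w \in W & dist x w != dist y w.

Definition Wia n1 n2 n3 (W : {set vtx n1 n2 n3}) (i : 'I_3) (a : nat)
  : {set vtx n1 n2 n3} := [set w in W | coord w i == a].

(* hyperedges of G(W): nonempty W_{i,a}, colored i *)
Definition hyperedge n1 n2 n3 (W : {set vtx n1 n2 n3}) (i : 'I_3)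
  (E : {set vtx n1 n2 n3}) : Prop :=
  exists a, E = Wia W i a /\ E != set0.

Definition triple_loop n1 n2 n3 (W : {set vtx n1 n2 n3}) (u : vtx n1 n2 n3) : Prop :=
  u \in W /\ forall i : 'I_3, Wia W i (coord u i) = [set u].

Definition has_triple_loop n1 n2 n3 (W : {set vtx n1 n2 n3}) : Prop :=
  exists u, triple_loop W u.

Definition has_rainbow_22_triangle n1 n2 n3 (W : {set vtx n1 n2 n3}) : Prop :=
  exists (w1 w2 w3 : vtx n1 n2 n3) (i j k : 'I_3),
    [/\ [/\ w1 \in W, w2 \in W & w3 \in W],
        [/\ w1 != w2, w2 != w3 & w1 != w3],
        [/\ i != j, j != k & i != k],
        hyperedge W i [set w1; w2] /\ hyperedge W j [set w2; w3] &
        exists E, hyperedge W k E /\ w1 \in E /\ w3 \in E].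

From mathcomp Require Import all_boot.
From mathcomp Require Import zify.
Set Implicit Arguments. Unset Strict Implicit.

(* When every n_i >= 3, any two distinct vertices are at distance 1 or 2, so a
   landmark w distinguishes x from y exactly when one of them agrees with w in
   some coordinate and the other does not.  With the triple loop u and the
   rainbow triangle w1 w2 w3 (w1,w2 alone in colour i, w2,w3 alone in colour j,
   w1,w3 together in colour k), the vertex w1 with its j-th coordinate replaced
   by u's and the vertex w3 with its i-th coordinate replaced by u's lie outside
   W and agree with exactly the same landmarks. *)

Lemma ord3_cases (i j k l : 'I_3) :
  i != j -> j != k -> i != k -> [|| l == i, l == j | l == k].
Proof.
by case: i => [[|[|[|?]]] ?]; case: j => [[|[|[|?]]] ?]; case: k => [[|[|[|?]]] ?];
   case: l => [[|[|[|?]]] ?].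
Qed.

Lemma exists_ord_neq2 (m : nat) (a b : 'I_m) :
  3 <= m -> exists z : 'I_m, (z != a) && (z != b).
Proof.
move=> m_ge3; have : 0 < #|~: [set a; b]|.
  by have := cardsC [set a; b]; rewrite card_ord cards2; case: (a != b) => /=; lia.
by case/card_gt0P => z; rewrite !inE negb_or; exists z.
Qed.

Section ProductOfCompleteGraphs.
Variables n1 n2 n3 : nat.
Local Notation V := (vtx n1 n2 n3).

Definition share (x y : V) : bool := [exists l, coord x l == coord y l].

Lemma share_of_coord l (x y : V) : coord x l = coord y l -> share x y.
Proof. by move=> xy; apply/existsP; exists l; rewrite xy. Qed.

Lemma adjE (x y : V) : adj x y = ~~ share x y.
Proof.
rewrite /adj /share negb_exists.
case: x => [[x1 x2] x3]; case: y => [[y1 y2] y3] /=.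
apply/and3P/forallP => [[h1 h2 h3] [[|[|[|?]]] p] //|H].
by split; [exact: (H ord0)|exact: (H (Ordinal (isT : 1 < 3)))
          |exact: (H (Ordinal (isT : 2 < 3)))].
Qed.

Lemma dist_neq (x y : V) : 3 <= n1 -> 3 <= n2 -> 3 <= n3 -> x != y ->
  dist x y = if adj x y then 1 else 2.
Proof.
move=> h1 h2 h3 x_neq_y.
have walk2 : walk 2 x y.
  case: x x_neq_y => [[x1 x2] x3] _; case: y => [[y1 y2] y3].
  have [z1 /andP[a1 b1]] := exists_ord_neq2 x1 y1 h1.
  have [z2 /andP[a2 b2]] := exists_ord_neq2 x2 y2 h2.
  have [z3 /andP[a3 b3]] := exists_ord_neq2 x3 y3 h3.
  apply/existsP; exists ((z1, z2), z3); apply/andP; split.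
    by rewrite /adj /= ![_ == z1]eq_sym ![_ == z2]eq_sym ![_ == z3]eq_sym a1 a2 a3.
  by apply/existsP; exists ((y1, y2), y3); rewrite eqxx andbT /adj /= b1 b2 b3.
have walk1 : walk 1 x y = adj x y.
  by apply/existsP/idP => [[z /andP[h /eqP <-]]|h] //; exists y; rewrite h eqxx.
have card_ge3 : #|V| = (#|V| - 3).+3.
  have : 27 <= n1 * n2 * n3 by rewrite (_ : 27 = 3 * 3 * 3) // !leq_mul.
  by rewrite !card_prod !card_ord; lia.
rewrite /dist card_ge3 /= (negbTE x_neq_y) -/(walk 1 x y) walk1.
by case: (adj x y); rewrite //= -/(walk 2 x y) walk2.
Qed.

Lemma not_resolving_of_share (W : {set V}) (x y : V) :
  3 <= n1 -> 3 <= n2 -> 3 <= n3 -> x \notin W -> y \notin W -> x != y ->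
  {in W, forall w, share x w = share y w} -> ~ resolving W.
Proof.
move=> h1 h2 h3 xW yW x_neq_y same /(_ x y xW yW x_neq_y) [w wW].
have x_neq_w : x != w by apply: contraNneq xW => ->.
have y_neq_w : y != w by apply: contraNneq yW => ->.
by rewrite !dist_neq // !adjE same ?eqxx.
Qed.

Definition mix (s : 'I_3 -> V) : V :=
  (((s ord0).1.1, (s (Ordinal (isT : 1 < 3))).1.2), (s (Ordinal (isT : 2 < 3))).2).

Lemma coord_mix s l : coord (mix s) l = coord (s l) l.
Proof.
case: l => [[|[|[|?]]] p] //; rewrite /mix /coord /=.
- by rewrite (_ : Ordinal p = ord0) //; apply: val_inj.
- by rewrite (_ : Ordinal p = Ordinal (isT : 1 < 3)) //; apply: val_inj.
- by rewrite (_ : Ordinal p = Ordinal (isT : 2 < 3)) //; apply: val_inj.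
Qed.

Definition set_coord (v : V) (l : 'I_3) (u : V) : V :=
  mix (fun m => if m == l then u else v).

Lemma coord_set_coord v l u m :
  coord (set_coord v l u) m = if m == l then coord u m else coord v m.
Proof. by rewrite coord_mix; case: (m == l). Qed.

Variable W : {set V}.

Lemma mem_Wia w i a : (w \in Wia W i a) = (w \in W) && (coord w i == a).
Proof. by rewrite inE. Qed.

Lemma hyperedge_coord i E x y :
  hyperedge W i E -> x \in E -> y \in E -> coord x i = coord y i.
Proof.
by case=> a [-> _]; rewrite !mem_Wia => /andP[_ /eqP ->] /andP[_ /eqP ->].
Qed.

Lemma hyperedge_closed i E x w :
  hyperedge W i E -> x \in E -> w \in W -> coord w i = coord x i -> w \in E.
Proof.
case=> a [-> _]; rewrite !mem_Wia => /andP[_ /eqP xi] wW wi.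
by rewrite wW wi xi eqxx.
Qed.

Lemma triple_loop_eq u l w :
  triple_loop W u -> w \in W -> coord w l = coord u l -> w = u.
Proof.
case=> _ loop wW wl.
have : w \in Wia W l (coord u l) by rewrite mem_Wia wW wl eqxx.
by rewrite loop => /set1P.
Qed.

Lemma triple_loop_coord_neq u l w w' :
  triple_loop W u -> w \in W -> w' \in W -> w != w' ->
  coord w' l = coord w l -> coord u l != coord w l.
Proof.
move=> loop wW w'W w_neq_w' w'l; apply/eqP => ul.
have w_u := triple_loop_eq loop wW (esym ul).
have w'_u := triple_loop_eq loop w'W (etrans w'l (esym ul)).
by move: w_neq_w'; rewrite w_u w'_u eqxx.
Qed.

Lemma set_coord_notin u i j w w' :
  triple_loop W u -> w \in W -> w' \in W -> w != w' ->
  coord w' i = coord w i -> i != j -> set_coord w j u \notin W.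
Proof.
move=> loop wW w'W w_neq_w' w'i i_neq_j; apply/negP => xW.
have x_u : set_coord w j u = u.
  by apply: (triple_loop_eq (l := j) loop xW); rewrite coord_set_coord eqxx.
have := triple_loop_coord_neq loop wW w'W w_neq_w' w'i.
by rewrite -x_u coord_set_coord (negbTE i_neq_j) eqxx.
Qed.

Lemma share_set_coord_twin u w1 w2 w3 i j k w :
  i != j -> j != k -> i != k -> triple_loop W u ->
  hyperedge W i [set w1; w2] -> coord w2 j = coord w3 j ->
  coord w1 k = coord w3 k -> w \in W ->
  share (set_coord w1 j u) w -> share (set_coord w3 i u) w.
Proof.
move=> ij jk ik loop Ei w2j w13k wW /existsP [l /eqP].
rewrite coord_set_coord => xl.
case/or3P: (ord3_cases l ij jk ik) => /eqP el; subst l.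
- rewrite (negbTE ij) in xl.
  have : w \in [set w1; w2] by apply: hyperedge_closed Ei (set21 _ _) wW _.
  case/set2P => ->.
    by apply: (share_of_coord (l := k)); rewrite coord_set_coord eq_sym (negbTE ik) w13k.
  by apply: (share_of_coord (l := j)); rewrite coord_set_coord eq_sym (negbTE ij) w2j.
- rewrite eqxx in xl; rewrite (triple_loop_eq loop wW (esym xl)).
  by apply: (share_of_coord (l := i)); rewrite coord_set_coord eqxx.
- rewrite eq_sym (negbTE jk) in xl.
  by apply: (share_of_coord (l := k)); rewrite coord_set_coord eq_sym (negbTE ik) -w13k.
Qed.

End ProductOfCompleteGraphs.

Theorem mainTheorem3 (n1 n2 n3 : nat) (W : {set vtx n1 n2 n3}) :
  3 <= n1 -> 3 <= n2 -> n1 <= n3 -> n2 <= n3 ->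
  has_triple_loop W -> has_rainbow_22_triangle W ->
  ~ resolving W.
Proof.
move=> h1 h2 h13 _ [u loop] [w1 [w2 [w3 [i [j [k [[w1W w2W w3W] [w12 w23 w13]
  [ij jk ik] [Ei Ej] [E [Ek [w1E w3E]]]]]]]]]].
have h3 : 3 <= n3 by apply: leq_trans h13.
have w12i := hyperedge_coord Ei (set21 w1 w2) (set22 w1 w2).
have w23j := hyperedge_coord Ej (set21 w2 w3) (set22 w2 w3).
have w13k := hyperedge_coord Ek w1E w3E.
have Ej' : hyperedge W j [set w3; w2] by rewrite setUC.
apply: (@not_resolving_of_share _ _ _ W (set_coord w1 j u) (set_coord w3 i u)) => //.
- exact: set_coord_notin loop w1W w2W w12 (esym w12i) ij.
- by apply: set_coord_notin loop w3W w2W _ w23j _; rewrite eq_sym.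
- apply/eqP => /(congr1 (fun v => coord v i)).
  rewrite !coord_set_coord eqxx (negbTE ij) => /esym/eqP.
  by apply/negP; apply: triple_loop_coord_neq loop w1W w2W w12 (esym w12i).
- move=> w wW; apply/idP/idP; first exact: share_set_coord_twin ij jk ik loop Ei w23j w13k wW.
  by apply: share_set_coord_twin ik jk loop Ej' (esym w12i) (esym w13k) wW; rewrite eq_sym.
Qed.
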